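(* Let $d\ge1$ and let $T$ be a $d\times d$ column-stochastic matrix. For each row $i$ choose a permutation $\sigma_i$ of $\{1,\dots,d\}$ such that $T_{i\sigma_i(1)}\ge T_{i\sigma_i(2)}\ge\dots\ge T_{i\sigma_i(d)}$, and for $n=1,\dots,d$ define $K_n=\sum_{i=1}^d\sqrt{T_{i\sigma_i(n)}}\,|i\rangle\langle\sigma_i(n)|$. Then $\Phi(\rho)=\sum_{n=1}^dK_n\rho K_n^\dagger$ is a quantum channel whose classical action is $T$, and the nonzero part of the spectrum of its Jamio{\l}kowski state is given by $$\boldsymbol{\lambda}(J_\Phi)=\frac1d\sum_{i=1}^d\mathbf{r}^{(i)},\qquad \mathbf{r}^{(i)}=(T_{i1},\dots,T_{id})^\downarrow,$$ (padded with zeros to length $d^2$). In particular, every $T$ is the classical action of a channel whose Jamio{\l}kowski state has rank at most $d$ (i.e., with at most $d$ Kraus operators).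
   Context: Fix an orthonormal basis $\{|i\rangle\}_{i=1}^d$ of $\mathbb{C}^d$, $|\Omega\rangle=\sum_i|ii\rangle$. The Jamio{\l}kowski state of a channel $\Phi$ is $J_\Phi=\frac1d(\Phi\otimes\mathcal{I})(|\Omega\rangle\langle\Omega|)$. The classical action of $\Phi$ is the matrix $T$ with $T_{ij}=\langle i|\Phi(|j\rangle\langle j|)|i\rangle$. A column-stochastic matrix satisfies $T_{ij}\ge0$ and $\sum_iT_{ij}=1$ for all $j$. $\boldsymbol{\lambda}(X)$ denotes eigenvalues in non-increasing order and $x^\downarrow$ the non-increasing rearrangement of a vector $x$. *)

From HB Require Import structures.
From mathcomp Require Import all_boot all_order all_fingroup all_algebra.
From mathcomp Require Import complex mxtens.
Set Implicit Arguments. Unset Strict Implicit. Unset Printing Implicit Defensive.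
Import Order.TTheory GRing.Theory Num.Theory.
Local Open Scope ring_scope.
Local Open Scope complex_scope.

Section Defs.
Variable R : rcfType.
Local Notation C := R[i].

Definition adjmx m n (A : 'M[C]_(m, n)) : 'M[C]_(n, m) := (map_mx Num.conj A)^T.

Definition psd n (A : 'M[C]_n) : Prop :=
  adjmx A = A /\ forall v : 'cV[C]_n, 0 <= (adjmx v *m A *m v) 0 0.

(* (Phi \otimes id_m)(X), for X on C^d \otimes C^m, with basis |j>|a> indexed by
   mxtens_index (j, a) (the convention of tensmx) *)
Definition ext_id d m (Phi : 'M[C]_d -> 'M[C]_d) (X : 'M[C]_(d * m)) : 'M[C]_(d * m) :=
  \sum_(j < d) \sum_(k < d) \sum_(a < m) \sum_(b < m)
     X (mxtens_index (j, a)) (mxtens_index (k, b)) *: (Phi (delta_mx j k) *t delta_mx a b).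

Definition quantum_channel d (Phi : 'M[C]_d -> 'M[C]_d) : Prop :=
  [/\ (forall (c : C) X Y, Phi (c *: X + Y) = c *: Phi X + Phi Y),
      (forall m (X : 'M[C]_(d * m)), psd X -> psd (ext_id Phi X)) &
      (forall X, \tr (Phi X) = \tr X)].

(* Jamiolkowski state J = 1/d (Phi \otimes I)(|Omega><Omega|),
   |Omega><Omega| = sum_{j,k} |j><k| \otimes |j><k| *)
Definition jamiolkowski d (Phi : 'M[C]_d -> 'M[C]_d) : 'M[C]_(d * d) :=
  (d%:R)^-1 *: \sum_(j < d) \sum_(k < d) (Phi (delta_mx j k) *t delta_mx j k).

Definition classical_action d (Phi : 'M[C]_d -> 'M[C]_d) : 'M[C]_d :=
  \matrix_(i, j) Phi (delta_mx j j) i i.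

Definition column_stochastic d (T : 'M[R]_d) : Prop :=
  (forall i j, 0 <= T i j) /\ (forall j, \sum_i T i j = 1).

Definition kraus d (T : 'M[R]_d) (sigma : 'I_d -> 'S_d) (n : 'I_d) : 'M[C]_d :=
  \sum_(i < d) (Num.sqrt (T i (sigma i n)))%:C *: delta_mx i (sigma i n).

Definition kraus_channel d (T : 'M[R]_d) (sigma : 'I_d -> 'S_d) (rho : 'M[C]_d) : 'M[C]_d :=
  \sum_(n < d) kraus T sigma n *m rho *m adjmx (kraus T sigma n).

(* r^(i) = non-increasing rearrangement of row i of T (entry n, 0-based) *)
Definition sorted_row d (T : 'M[R]_d) (i : 'I_d) (n : nat) : R :=
  nth 0 (sort >=%R [seq T i j | j <- enum 'I_d]) n.

Definition predicted_spectrum d (T : 'M[R]_d) (k : 'I_(d * d)) : R :=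
  if (k < d)%N then (d%:R)^-1 * \sum_(i < d) sorted_row T i k else 0.

End Defs.

(* The Kraus operator K_n picks from every row i the single entry sqrt T_{i sigma_i(n)},
   at position (i, sigma_i(n)).  Hence
     K_n^* K_m = sum_i sqrt (T_{i sigma_i(n)} T_{i sigma_i(m)}) |sigma_i(n)><sigma_i(m)|,
   so that sum_n K_n^* K_n = sum_{i,b} T_{ib} |b><b| = 1 by column-stochasticity, while
   tr (K_n^* K_m) = 0 for n <> m because each sigma_i is injective.  Writing
   d J = V V^* where the columns of V are the vectorised K_n, the Gram matrix V^* V is
   thus diagonal with entries sum_i T_{i sigma_i(n)}, and V V^* has the same nonzero
   spectrum as V^* V.  Since sigma_i sorts row i, the n-th of these entries is the sum of
   the n-th largest entries of the rows. *)

From HB Require Import structures.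
From mathcomp Require Import all_boot all_order all_fingroup all_algebra.
From mathcomp Require Import complex mxtens.
Import Order.TTheory GRing.Theory Num.Theory.
Local Open Scope ring_scope.
Local Open Scope complex_scope.
Set Implicit Arguments. Unset Strict Implicit.

Section Adjoint.
Variable R : rcfType.
Local Notation C := R[i].
Local Notation cj := (@Num.conj C).

Lemma conjC_real (x : R) : cj x%:C = x%:C.
Proof. by apply: conj_Creal; apply/complex_realP; exists x. Qed.

Lemma sqrtC_mul_self (x : R) : 0 <= x -> (Num.sqrt x)%:C * (Num.sqrt x)%:C = x%:C.
Proof. by move=> x_ge0; rewrite -rmorphM /= -expr2 sqr_sqrtr. Qed.

Lemma adjmxE m n (A : 'M[C]_(m, n)) i j : adjmx A i j = cj (A j i).
Proof. by rewrite !mxE. Qed.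

Lemma adjmxK m n (A : 'M[C]_(m, n)) : adjmx (adjmx A) = A.
Proof. by apply/matrixP => i j; rewrite !adjmxE conjCK. Qed.

Lemma adjmxM m n p (A : 'M[C]_(m, n)) (B : 'M[C]_(n, p)) :
  adjmx (A *m B) = adjmx B *m adjmx A.
Proof. by rewrite /adjmx map_mxM trmx_mul. Qed.

Lemma adjmx_sum m n (I : finType) (F : I -> 'M[C]_(m, n)) :
  adjmx (\sum_i F i) = \sum_i adjmx (F i).
Proof. by rewrite /adjmx map_mx_sum linear_sum. Qed.

Lemma adjmxZ m n (c : C) (A : 'M[C]_(m, n)) : adjmx (c *: A) = cj c *: adjmx A.
Proof. by rewrite /adjmx map_mxZ linearZ. Qed.

Lemma adjmx_delta m n (i : 'I_m) (j : 'I_n) :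
  adjmx (delta_mx i j) = delta_mx j i :> 'M[C]_(n, m).
Proof. by rewrite /adjmx map_delta_mx trmx_delta. Qed.

Lemma adjmx1 n : adjmx (1%:M : 'M[C]_n) = 1%:M.
Proof. by rewrite /adjmx map_mx1 trmx1. Qed.

Lemma adjmx_tens m n p q (A : 'M[C]_(m, n)) (B : 'M[C]_(p, q)) :
  adjmx (A *t B) = adjmx A *t adjmx B.
Proof. by rewrite /adjmx map_mxT trmx_tens. Qed.

Lemma psd_sum n (I : finType) (F : I -> 'M[C]_n) :
  (forall i, psd (F i)) -> psd (\sum_i F i).
Proof.
move=> psdF; split.
  by rewrite adjmx_sum; apply: eq_bigr => i _; case: (psdF i).
move=> v; rewrite mulmx_sumr mulmx_suml summxE sumr_ge0 // => i _.
by case: (psdF i) => _ ->.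
Qed.

Lemma psd_mul_adj m n (M : 'M[C]_(m, n)) (X : 'M[C]_n) :
  psd X -> psd (M *m X *m adjmx M).
Proof.
move=> [hermX posX]; split; first by rewrite !adjmxM adjmxK hermX mulmxA.
by move=> v; have := posX (adjmx M *m v); rewrite adjmxM adjmxK !mulmxA.
Qed.

End Adjoint.

Lemma sum_mxtens_index (V : nmodType) m n (F : 'I_(m * n) -> V) :
  \sum_p F p = \sum_i \sum_j F (mxtens_index (i, j)).
Proof.
rewrite pair_big /= (reindex (@mxtens_index m n)) /=; first by apply: eq_bigr => -[].
by exists (@mxtens_unindex m n) => x _; rewrite ?mxtens_indexK ?mxtens_unindexK.
Qed.

Section Tensor.
Variable R : comPzRingType.

Lemma tens_delta_mx m n p q (j : 'I_m) (k : 'I_n) (a : 'I_p) (b : 'I_q) :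
  delta_mx j k *t delta_mx a b
  = delta_mx (mxtens_index (j, a)) (mxtens_index (k, b)) :> 'M[R]_(m * p, n * q).
Proof.
apply/matrixP => x y; case: x / mxtens_indexP => j' a'; case: y / mxtens_indexP => k' b'.
rewrite tensmxE !mxE !(inj_eq (can_inj (@mxtens_indexK _ _))) !xpair_eqE.
by rewrite -natrM mulnb andbACA.
Qed.

Lemma tensmx_suml m n p q (I : finType) (A : I -> 'M[R]_(m, n)) (B : 'M[R]_(p, q)) :
  (\sum_i A i) *t B = \sum_i (A i *t B).
Proof.
apply/matrixP => x y; case: x / mxtens_indexP => j a; case: y / mxtens_indexP => k b.
by rewrite tensmxE !summxE mulr_suml; apply: eq_bigr => i _; rewrite tensmxE.
Qed.

End Tensor.

Section KrausMap.
Variable R : rcfType.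
Local Notation C := R[i].

Definition kraus_map d r (K : 'I_r -> 'M[C]_d) (rho : 'M[C]_d) : 'M[C]_d :=
  \sum_n K n *m rho *m adjmx (K n).

Lemma kraus_map_is_linear d r (K : 'I_r -> 'M[C]_d) : linear (kraus_map K).
Proof.
move=> c X Y; rewrite /kraus_map scaler_sumr -big_split /=; apply: eq_bigr => n _.
by rewrite mulmxDr mulmxDl -scalemxAr -scalemxAl.
Qed.

End KrausMap.

HB.instance Definition _ (R : rcfType) d r (K : 'I_r -> 'M[R[i]]_d) :=
  GRing.isLinear.Build R[i] 'M[R[i]]_d 'M[R[i]]_d *:%R (kraus_map K)
    (kraus_map_is_linear K).

Section KrausFamily.
Variable R : rcfType.
Local Notation C := R[i].
Local Notation cj := (@Num.conj C).
Variables (d r : nat) (K : 'I_r -> 'M[C]_d).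

Lemma kraus_map_tens m (A : 'M[C]_d) (B : 'M[C]_m) :
  kraus_map K A *t B = kraus_map (fun n => K n *t 1%:M) (A *t B).
Proof.
rewrite tensmx_suml; apply: eq_bigr => n _.
by rewrite adjmx_tens adjmx1 !tensmx_mul mulmx1 mul1mx.
Qed.

(* Both sides are linear in X, and they agree on the basis matrices
   delta_mx (j, a) (k, b) = delta_mx j k *t delta_mx a b by kraus_map_tens. *)
Lemma ext_id_kraus_map m (X : 'M[C]_(d * m)) :
  ext_id (kraus_map K) X = kraus_map (fun n => K n *t 1%:M) X.
Proof.
rewrite [in RHS](matrix_sum_delta X) linear_sum.
under eq_bigr => p _ do rewrite linear_sum.
under eq_bigr => p _ do under eq_bigr => q _ do rewrite linearZ /=.
rewrite sum_mxtens_index; under eq_bigr => j _ do under eq_bigr => a _ do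
  rewrite sum_mxtens_index.
rewrite /ext_id; apply: eq_bigr => j _; rewrite exchange_big; apply: eq_bigr => a _.
apply: eq_bigr => k _; apply: eq_bigr => b _.
by rewrite kraus_map_tens tens_delta_mx.
Qed.

Lemma kraus_map_cp m (X : 'M[C]_(d * m)) : psd X -> psd (ext_id (kraus_map K) X).
Proof.
by move=> psdX; rewrite ext_id_kraus_map; apply: psd_sum => n; exact: psd_mul_adj.
Qed.

Lemma kraus_map_trace X :
  \sum_n adjmx (K n) *m K n = 1%:M -> \tr (kraus_map K X) = \tr X.
Proof.
move=> completeK; rewrite /kraus_map raddf_sum /=.
under eq_bigr => n _ do rewrite mxtrace_mulC mulmxA.
by rewrite -(raddf_sum (mxtrace : _ -> C)) -mulmx_suml completeK mul1mx.
Qed.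

Lemma kraus_map_deltaE a b p q :
  kraus_map K (delta_mx a b) p q = \sum_n K n p a * cj (K n q b).
Proof.
rewrite summxE; apply: eq_bigr => n _.
rewrite -(mul_delta_mx (0 : 'I_1)) mulmxA -colE -mulmxA -rowE.
by rewrite !mxE big_ord1 !mxE.
Qed.

Definition kraus_vec_mx : 'M[C]_(d * d, r) :=
  \matrix_(p, n) K n (mxtens_unindex p).1 (mxtens_unindex p).2.

Lemma jamiolkowski_kraus_map :
  jamiolkowski (kraus_map K) = d%:R^-1 *: (kraus_vec_mx *m adjmx kraus_vec_mx).
Proof.
congr (_ *: _); apply/matrixP => p q.
case: p / mxtens_indexP => i a; case: q / mxtens_indexP => i' b.
pose F := \matrix_(j, k) kraus_map K (delta_mx j k) i i'.
transitivity (F a b).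
  have /matrixP/(_ a b) := matrix_sum_delta F; rewrite mxE => ->.
  rewrite !summxE; apply: eq_bigr => j _; rewrite !summxE; apply: eq_bigr => k _.
  by rewrite tensmxE !mxE.
rewrite mxE kraus_map_deltaE mxE; apply: eq_bigr => n _.
by rewrite !mxE !mxtens_indexK.
Qed.

Lemma kraus_vec_gramE n m :
  (adjmx kraus_vec_mx *m kraus_vec_mx) n m = \tr (adjmx (K n) *m K m).
Proof.
rewrite mxE sum_mxtens_index /mxtrace exchange_big; apply: eq_bigr => a _.
rewrite mxE; apply: eq_bigr => i _; by rewrite !mxE mxtens_indexK.
Qed.

End KrausFamily.

Lemma sum_perm (V : nmodType) (I : finType) (s : {perm I}) (F : I -> V) :
  \sum_i F (s i) = \sum_i F i.
Proof. by rewrite [RHS](reindex_inj (@perm_inj _ s)). Qed.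

Lemma mxtrace_delta (R : pzSemiRingType) n (a b : 'I_n) :
  \tr (delta_mx a b : 'M[R]_n) = (a == b)%:R.
Proof.
rewrite /mxtrace (bigD1 a) //= big1 ?addr0 => [|c /negbTE ca]; by rewrite mxE ?eqxx ?ca.
Qed.

Section StochasticKraus.
Variable R : rcfType.
Variables (d : nat) (T : 'M[R]_d) (sigma : 'I_d -> 'S_d).
Hypothesis T_ge0 : forall i j, 0 <= T i j.

Local Notation K := (kraus T sigma).
Local Notation sq x := (Num.sqrt x)%:C.

Lemma krausE n a b : K n a b = sq (T a b) *+ (b == sigma a n).
Proof.
rewrite summxE (bigD1 a) //= big1 ?addr0 => [|i /negbTE ia]; rewrite !mxE.
  by rewrite eqxx mulr_natr; case: eqP => [->|].
by rewrite (eq_sym a) ia mulr0.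
Qed.

Lemma adjmx_kraus n : adjmx (K n) = \sum_i sq (T i (sigma i n)) *: delta_mx (sigma i n) i.
Proof.
by rewrite adjmx_sum; apply: eq_bigr => i _; rewrite adjmxZ adjmx_delta conjC_real.
Qed.

Lemma adjmx_kraus_mul n m :
  adjmx (K n) *m K m = \sum_i (sq (T i (sigma i n)) * sq (T i (sigma i m)))
                               *: delta_mx (sigma i n) (sigma i m).
Proof.
rewrite adjmx_kraus mulmx_suml; apply: eq_bigr => i _.
rewrite mulmx_sumr (bigD1 i) //= big1 ?addr0 => [|i' i'i].
  by rewrite -scalemxAl -scalemxAr mul_delta_mx scalerA.
by rewrite -scalemxAl -scalemxAr mul_delta_mx_0 ?scaler0 // eq_sym.
Qed.

Lemma sum_adjmx_kraus_mul :
  (forall j, \sum_i T i j = 1) -> \sum_n adjmx (K n) *m K n = 1%:M.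
Proof.
move=> T_sum; under eq_bigr => n _ do rewrite adjmx_kraus_mul.
rewrite exchange_big /= mx1_sum_delta.
under eq_bigr => i _ do rewrite (sum_perm (sigma i)
  (fun b => (sq (T i b) * sq (T i b)) *: delta_mx b b)).
rewrite exchange_big /=; apply: eq_bigr => b _.
under eq_bigr => i _ do rewrite sqrtC_mul_self //.
by rewrite -scaler_suml -rmorph_sum /= T_sum scale1r.
Qed.

Lemma classical_action_kraus :
  classical_action (kraus_channel T sigma) = map_mx (fun x => x%:C) T.
Proof.
apply/matrixP => i j; rewrite !mxE kraus_map_deltaE.
under eq_bigr => n _ do
  rewrite krausE rmorphMn /= conjC_real mulrnAl mulrnAr sqrtC_mul_self //.
rewrite (sum_perm (sigma i) (fun b => (T i j)%:C *+ (j == b) *+ (j == b))).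
rewrite (bigD1 j) //= big1 ?addr0 => [|b /negbTE bj]; first by rewrite eqxx.
by rewrite eq_sym bj.
Qed.

Definition kraus_weight (n : 'I_d) : R := \sum_i T i (sigma i n).

Lemma kraus_vec_gram :
  adjmx (kraus_vec_mx K) *m kraus_vec_mx K = diag_mx (\row_n (kraus_weight n)%:C).
Proof.
apply/matrixP => n m; rewrite kraus_vec_gramE adjmx_kraus_mul !mxE raddf_sum /=.
rewrite /kraus_weight rmorph_sum -sumrMnl; apply: eq_bigr => i _.
rewrite mxtraceZ mxtrace_delta (inj_eq perm_inj) mulr_natr.
by case: eqP => [->|]; rewrite ?sqrtC_mul_self.
Qed.

End StochasticKraus.

(* Multiplying M = [1 A; B x] on the right by [x 0; -B 1] and on the left by
   [1 0; -B 1] gives det M * x^m = det (x - AB) * x^n and det M = det (x - BA). *)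
Lemma char_poly_mulmxC (F : fieldType) m n (A : 'M[F]_(m, n)) (B : 'M[F]_(n, m)) :
  char_poly (A *m B) * 'X^n = 'X^m * char_poly (B *m A).
Proof.
rewrite /char_poly /char_poly_mx !map_mxM.
set x : {poly F} := 'X; set Ap := map_mx polyC A; set Bp := map_mx polyC B.
pose M := block_mx (1%:M : 'M_m) Ap Bp (x%:M : 'M_n).
have detMr : M *m block_mx (x%:M : 'M_m) 0 (- Bp) (1%:M : 'M_n)
    = block_mx (x%:M - Ap *m Bp) Ap 0 (x%:M).
  rewrite mulmx_block mul1mx mulmxN mulmx0 mulmx1 add0r.
  by rewrite mul_mx_scalar mul_scalar_mx scalerN addrN mulmx0 add0r mulmx1.
have detMl : block_mx (1%:M : 'M_m) 0 (- Bp) (1%:M : 'M_n) *m M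
    = block_mx 1%:M Ap 0 (x%:M - Bp *m Ap).
  by rewrite mulmx_block !mul1mx !mul0mx !addr0 mulmx1 mulNmx addNr addrC.
move/(congr1 determinant): detMr; move/(congr1 determinant): detMl.
rewrite !det_mulmx !det_lblock !det_ublock !det_scalar !expr1n !mul1r mulr1.
by move=> <- <-; rewrite mulrC.
Qed.

Lemma sort_ge_perm (R : realDomainType) n (f : 'I_n -> R) (s : 'S_n) :
  (forall a b : 'I_n, (a <= b)%N -> f (s b) <= f (s a)) ->
  sort >=%R [seq f j | j <- enum 'I_n] = [seq f (s k) | k <- enum 'I_n].
Proof.
move=> f_s_antitone.
have ge_trans : transitive (>=%R : rel R) by move=> a b c ba cb; exact: le_trans cb ba.
have sorted_fs : sorted >=%R [seq f (s k) | k <- enum 'I_n].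
  have : sorted leq [seq val k | k <- enum 'I_n] by rewrite val_enum_ord iota_sorted.
  by rewrite !sorted_map; apply: sub_sorted => a b; exact: f_s_antitone.
rewrite -[RHS](sorted_sort ge_trans sorted_fs); apply/perm_sortP => //.
- by move=> a b; exact: le_total.
- by move=> a b /andP [ba ab]; apply: le_anti; apply/andP.
rewrite (map_comp f s); apply: perm_map; apply: uniq_perm.
- exact: enum_uniq.
- by rewrite (map_inj_uniq perm_inj) enum_uniq.
move=> j; rewrite mem_enum; symmetry; apply/mapP.
by exists ((s^-1)%g j); rewrite ?mem_enum ?permKV.
Qed.

Section Spectrum.
Variable R : rcfType.
Local Notation C := R[i].
Variables (d : nat) (T : 'M[R]_d) (sigma : 'I_d -> 'S_d).
Hypothesis T_ge0 : forall i j, 0 <= T i j.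
Hypothesis rows_sorted :
  forall i (m n : 'I_d), (m <= n)%N -> T i (sigma i n) <= T i (sigma i m).

Local Notation weight := (kraus_weight T sigma).
Local Notation Phi := (kraus_channel T sigma).

Lemma sorted_rowE i n (n_lt_d : (n < d)%N) :
  sorted_row T i n = T i (sigma i (Ordinal n_lt_d)).
Proof.
rewrite /sorted_row (sort_ge_perm (s := sigma i)); last exact: rows_sorted.
rewrite (nth_map (Ordinal n_lt_d)) ?size_enum_ord //.
by congr (T i (sigma i _)); apply: val_inj; rewrite /= nth_enum_ord.
Qed.

Lemma predicted_spectrum_weight (k : 'I_(d * d)) (k_lt_d : (k < d)%N) :
  predicted_spectrum T k = d%:R^-1 * weight (Ordinal k_lt_d).
Proof.
rewrite /predicted_spectrum k_lt_d; congr (_ * _); apply: eq_bigr => i _.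
exact: sorted_rowE.
Qed.

Lemma predicted_spectrum_antitone (k l : 'I_(d * d)) :
  (k <= l)%N -> predicted_spectrum T l <= predicted_spectrum T k.
Proof.
move=> kl; have d_inv_ge0 : 0 <= (d%:R : R)^-1 by rewrite invr_ge0 ler0n.
case: (ltnP l d) => [l_lt_d | d_le_l].
  have k_lt_d := leq_ltn_trans kl l_lt_d.
  rewrite !predicted_spectrum_weight ler_wpM2l // ler_sum // => i _.
  exact: rows_sorted.
rewrite {1}/predicted_spectrum ltnNge d_le_l /=.
case: (ltnP k d) => [k_lt_d | d_le_k]; last by rewrite /predicted_spectrum ltnNge d_le_k.
by rewrite predicted_spectrum_weight mulr_ge0 // sumr_ge0.
Qed.

Lemma prod_predicted_spectrum :
  (\prod_(k < d * d) ('X - ((predicted_spectrum T k)%:C)%:P)) * 'X^d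
  = 'X^(d * d) * \prod_(n < d) ('X - ((d%:R^-1 * weight n)%:C)%:P) :> {poly C}.
Proof.
pose G k := ('X : {poly C}) - ((if (k < d)%N then d%:R^-1 * \sum_(i < d) sorted_row T i k
                                else 0)%:C)%:P.
have d_le_dd : (d <= d * d)%N by case: (posnP d) => [-> | /leq_pmull].
rewrite (eq_bigr (G \o val)) // -(big_mkord xpredT G) (big_cat_nat (leq0n d) d_le_dd) /=.
have -> : \prod_(d <= k < d * d) G k = 'X^(d * d - d).
  rewrite -prodr_const_nat big_nat_cond [RHS]big_nat_cond.
  apply: eq_bigr => k /andP [/andP [d_le_k _] _].
  by rewrite /G ltnNge d_le_k /= !rmorph0 subr0.
rewrite -mulrA -exprD subnK // mulrC big_mkord; congr (_ * _); apply: eq_bigr => n _.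
rewrite /G ltn_ord; congr ('X - (_%:C)%:P); congr (_ * _); apply: eq_bigr => i _.
by rewrite (sorted_rowE i (ltn_ord n)); congr (T i (sigma i _)); apply: val_inj.
Qed.

Lemma char_poly_jamiolkowski_kraus :
  char_poly (jamiolkowski Phi) * 'X^d
  = 'X^(d * d) * \prod_(n < d) ('X - ((d%:R^-1 * weight n)%:C)%:P).
Proof.
rewrite jamiolkowski_kraus_map scalemxAr char_poly_mulmxC -scalemxAl kraus_vec_gram //.
have -> : (d%:R^-1 : C) *: diag_mx (\row_n (weight n)%:C)
          = diag_mx (\row_n (d%:R^-1 * weight n)%:C).
  by apply/matrixP => a b; rewrite !mxE rmorphM /= fmorphV rmorph_nat mulrnAr.
rewrite char_poly_trig ?diag_mx_is_trig //; congr (_ * _); apply: eq_bigr => n _.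
by rewrite !mxE eqxx.
Qed.

End Spectrum.

Unset Implicit Arguments.

Theorem mainTheorem4 (R : rcfType) (d : nat) (T : 'M[R]_d) (sigma : 'I_d -> 'S_d) :
  (0 < d)%N ->
  column_stochastic T ->
  (forall i (m n : 'I_d), (m <= n)%N -> T i (sigma i n) <= T i (sigma i m)) ->
  [/\ quantum_channel (kraus_channel T sigma),
      classical_action (kraus_channel T sigma) = map_mx (fun x => x%:C) T,
      char_poly (jamiolkowski (kraus_channel T sigma))
        = \prod_(k < d * d) ('X - ((predicted_spectrum T k)%:C)%:P),
      (forall k l : 'I_(d * d), (k <= l)%N ->
         predicted_spectrum T l <= predicted_spectrum T k) &
      (\rank (jamiolkowski (kraus_channel T sigma)) <= d)%N].
Proof.
move=> _ [T_ge0 T_sum] rows_sorted; split.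
- split.
  + exact: kraus_map_is_linear.
  + by move=> m X; exact: kraus_map_cp.
  + by move=> X; apply: kraus_map_trace; exact: sum_adjmx_kraus_mul.
- exact: classical_action_kraus.
- have Xd_neq0 : ('X^d : {poly R[i]}) != 0 by rewrite monic_neq0 ?monicXn.
  apply: (mulIf Xd_neq0); rewrite (prod_predicted_spectrum rows_sorted).
  exact: char_poly_jamiolkowski_kraus.
- exact: predicted_spectrum_antitone T_ge0 rows_sorted.
- rewrite jamiolkowski_kraus_map scalemxAr.
  exact: leq_trans (mxrankM_maxl _ _) (rank_leq_col _).
Qed.
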